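(* Consider the following slotted system. There are $N\ge2$ users and slots $t=1,\dots,T$. In each slot the BS schedules one user by an arbitrary (possibly randomized) scheduling algorithm. An adversary uses a blocking matrix $\sigma\in\{0,1\}^{N\times T}$, where $\sigma_i(t)=0$ means user $i$ is blocked in slot $t$. Feasibility means $\sum_{i,t}(1-\sigma_i(t))\le\alpha T$ and at most one user is blocked per slot, where $0<\alpha<1$ and $\alpha T\in\mathbb Z$. Ages satisfy $a_i(1)=1$, $a_i(t+1)=1$ if user $i$ is scheduled and not blocked in slot $t$, and $a_i(t+1)=a_i(t)+1$ otherwise. The average age is $\Delta=\frac1T\sum_{t=1}^T\frac1N\sum_i\mathbb E[a_i(t)]$. Then for every scheduling algorithm there exists a feasible blocking matrix under which $\Delta\ge\frac{T\alpha^2}{2N}$. *)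

From mathcomp Require Import all_boot all_order all_algebra.
Set Implicit Arguments. Unset Strict Implicit. Unset Printing Implicit Defensive.
Import Order.TTheory GRing.Theory Num.Theory.
Local Open Scope ring_scope.

Section Model.
Variables (R : realFieldType) (N T : nat).

(* Blocking matrix: sigma i t = false means user i is blocked in slot t
   (slots 1..T are represented by the ordinals 0..T-1). *)
Definition blocking := 'I_N -> 'I_T -> bool.

Definition feasible (alpha : R) (sigma : blocking) : Prop :=
  ((\sum_(i < N) \sum_(t < T) (~~ sigma i t : nat))%N%:R <= alpha * T%:R)
  /\ forall t : 'I_T, (#|[set i : 'I_N | ~~ sigma i t]| <= 1)%N.

(* A general (possibly randomized, adaptive) scheduling algorithm, given as a
   behavioural strategy: after observing the history of (scheduled user,
   success/failure feedback) pairs of past slots, it schedules user u with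
   probability q h u. *)
Definition history := seq ('I_N * bool).
Definition scheduler := history -> 'I_N -> R.

Definition valid_scheduler (q : scheduler) : Prop :=
  (forall h u, 0 <= q h u) /\ (forall h, \sum_(u < N) q h u = 1).

Definition age_update (a : 'I_N -> nat) (u : 'I_N) (succ : bool) : 'I_N -> nat :=
  fun i => if (i == u) && succ then 1%N else (a i).+1.

(* Expected sum over the remaining slots s of (1/N) sum_i a_i(s),
   given the current ages a and history h. *)
Fixpoint exp_cost (q : scheduler) (sigma : blocking) (s : seq 'I_T)
    (h : history) (a : 'I_N -> nat) : R :=
  match s with
  | [::] => 0
  | t :: s' =>
      (\sum_(i < N) (a i)%:R) / N%:R +
      \sum_(u < N) q h u *
        exp_cost q sigma s' (rcons h (u, sigma u t)) (age_update a u (sigma u t))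
  end.

Definition avg_age (q : scheduler) (sigma : blocking) : R :=
  exp_cost q sigma (enum 'I_T) [::] (fun _ => 1%N) / T%:R.

End Model.

From mathcomp Require Import all_boot all_order all_algebra.
From mathcomp Require Import ring zify.
Set Implicit Arguments. Unset Strict Implicit. Unset Printing Implicit Defensive.
Import Order.TTheory GRing.Theory Num.Theory.
Local Open Scope ring_scope.

(** The adversary spends its whole budget [k = alpha T] on a single user,
    blocking it in the first [k] slots.  Whatever the scheduler does, that
    user is never served successfully there, so its age in slot [t <= k] is
    exactly [t]; the average age over users is thus at least [t / N] in
    slot [t], and summing gives [k (k + 1) / (2 N) >= (alpha T)^2 / (2 N)]
    before dividing by [T]. *)

Lemma ler_convex_comb (R : numDomainType) (I : finType) (w f : I -> R) (c : R) :
  (forall i, 0 <= w i) -> \sum_i w i = 1 -> (forall i, c <= f i) ->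
  c <= \sum_i w i * f i.
Proof.
move=> w_ge0 w_sum1 c_le_f; rewrite -[c]mul1r -w_sum1 mulr_suml.
by apply: ler_sum => i _; rewrite ler_wpM2l.
Qed.

Lemma double_sum_succ (k : nat) : ((\sum_(j < k) j.+1).*2 = k * k.+1)%N.
Proof. by elim: k => [|k IHk]; rewrite ?big_ord0 // big_ord_recr doubleD IHk /=; lia. Qed.

Lemma age_update_unserved (N : nat) (a : 'I_N -> nat) u succ i :
  (u = i -> ~~ succ) -> age_update a u succ i = (a i).+1.
Proof. by rewrite /age_update; case: eqP => [-> /(_ erefl) /negbTE ->|]. Qed.

Section BlockedUser.
Variables (R : realFieldType) (N T : nat) (q : scheduler R N) (sigma : blocking N T).
Hypothesis q_valid : valid_scheduler q.

Lemma exp_cost_ge0 s h a : 0 <= exp_cost q sigma s h a.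
Proof.
case: q_valid => q_ge0 _; elim: s h a => [|t s IHs] h a //=.
by rewrite addr_ge0 ?divr_ge0 ?sumr_ge0 // => u _; rewrite mulr_ge0.
Qed.

Lemma exp_cost_ge_blocked_age (i0 : 'I_N) s1 s2 h a :
  all (fun t => ~~ sigma i0 t) s1 ->
  (\sum_(j < size s1) (a i0 + j))%:R / N%:R <= exp_cost q sigma (s1 ++ s2) h a.
Proof.
case: q_valid => q_ge0 q_sum1.
elim: s1 h a => [|t s1 IHs1] h a /=; first by rewrite big_ord0 mul0r exp_cost_ge0.
case/andP => blocked_t blocked_s1.
rewrite big_ord_recl natrD mulrDl; apply: lerD.
  rewrite ler_wpM2r ?invr_ge0 // -natr_sum ler_nat (bigD1 i0) //=.
  by rewrite addn0 leq_addr.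
apply: ler_convex_comb => // u.
have := IHs1 (rcons h (u, sigma u t)) (age_update a u (sigma u t)) blocked_s1.
rewrite age_update_unserved; last by move=> ->.
by under eq_bigr => j _ do rewrite addSnnS.
Qed.

End BlockedUser.

Section PrefixBlocking.
Variables (N T : nat) (i0 : 'I_N) (k : nat).

Definition block_prefix : blocking N T := fun i t => ~~ ((i == i0) && (t < k)%N).

Lemma block_prefix_count :
  (k <= T)%N -> (\sum_(i < N) \sum_(t < T) (~~ block_prefix i t : nat))%N = k.
Proof.
move=> kT; rewrite (bigD1 i0) //= [X in (_ + X)%N]big1 ?addn0; last first.
  by move=> i /negbTE i_ne_i0; apply: big1 => t _; rewrite /block_prefix i_ne_i0.
rewrite /block_prefix eqxx; under eq_bigr => t _ do rewrite negbK.
by rewrite -big_mkcond -(big_ord_widen T (fun=> 1%N)) // sum1_card card_ord.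
Qed.

Lemma block_prefix_one_per_slot t : (#|[set i | ~~ block_prefix i t]| <= 1)%N.
Proof.
rewrite -(cards1 i0) subset_leq_card //.
by apply/subsetP => i; rewrite !inE negbK => /andP[].
Qed.

Lemma block_prefix_blocks_take : all (fun t => ~~ block_prefix i0 t) (take k (enum 'I_T)).
Proof.
apply/allP => t t_in; rewrite negbK eqxx /=.
have : val t \in map val (take k (enum 'I_T)) by apply: map_f.
by rewrite map_take val_enum_ord take_iota mem_iota leq_min => /and3P[].
Qed.

End PrefixBlocking.

Theorem lemma2 (R : realFieldType) (N T : nat) (alpha : R)
  (hN : (2 <= N)%N) (ha0 : 0 < alpha) (ha1 : alpha < 1)
  (haT : exists k : nat, alpha * T%:R = k%:R)
  (q : scheduler R N) (hq : valid_scheduler q) :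
  exists sigma : blocking N T,
    feasible alpha sigma /\
    T%:R * alpha ^+ 2 / (2 * N%:R) <= avg_age q sigma.
Proof.
case: haT => k hk.
have kT : (k <= T)%N by rewrite -(ler_nat R) -hk ler_piMl // ltW.
pose i0 : 'I_N := Ordinal (ltnW hN).
exists (block_prefix i0 k); split.
  by split; [rewrite block_prefix_count // hk | exact: block_prefix_one_per_slot].
rewrite /avg_age; case: (posnP T) => [-> | T_gt0]; first by rewrite !mul0r invr0 mulr0.
have T_neq0 : T%:R != 0 :> R by rewrite pnatr_eq0 -lt0n.
have N_neq0 : N%:R != 0 :> R by rewrite pnatr_eq0 -lt0n ltnW.
have -> : T%:R * alpha ^+ 2 / (2 * N%:R) = (k * k)%:R / (2 * N%:R) / T%:R.
  by rewrite natrM -hk; field; rewrite T_neq0 N_neq0.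
rewrite ler_wpM2r ?invr_ge0 //.
have := exp_cost_ge_blocked_age hq (drop k (enum 'I_T)) [::] (fun=> 1%N)
  (block_prefix_blocks_take T i0 k).
rewrite cat_take_drop size_takel ?size_enum_ord //; apply: le_trans.
under eq_bigr do rewrite add1n.
have -> : (\sum_(j < k) j.+1)%:R / N%:R = (k * k.+1)%:R / (2 * N%:R) :> R.
  by rewrite -double_sum_succ -muln2 natrM; field; rewrite N_neq0.
by rewrite ler_wpM2r ?invr_ge0 ?mulr_ge0 // ler_nat leq_mul2l leqnSn orbT.
Qed.
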